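(* Under the hypotheses of the setting below, for every $k$ with $H_k\bar z^k\neq H_kz^k$ the stepsize satisfies $\alpha_k\ge \tfrac{\delta_k}{\gamma_k}+\tfrac12>0$, the update satisfies $z^{k+1}=(1-\lambda_k)z^k+\lambda_k P_{\mathcal D_k}(z^k)$ where $P_{\mathcal D_k}$ is the Euclidean projection onto the closed half-space $\mathcal D_k=\{w:\langle H_kz^k-H_k\bar z^k,\bar z^k-w\rangle\ge\tfrac{\delta_k}{\gamma_k}\|H_kz^k-H_k\bar z^k\|^2\}$, $\mathcal S^\star\subseteq\mathcal D_k$, and for every $z^\star\in\mathcal S^\star$ $$\|z^{k+1}-z^\star\|^2\le\|z^k-z^\star\|^2-\frac{\lambda_k(2-\lambda_k)(\tfrac{\gamma_k}{2}+\delta_k)^2}{\gamma_k^2}\|H_k\bar z^k-H_kz^k\|^2 .$$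
   Context: Setting: $A:\mathbb R^n\rightrightarrows\mathbb R^n$ maximally monotone, $F:\mathbb R^n\to\mathbb R^n$ $L$-Lipschitz, $T=A+F$, $\operatorname{zer}T=\{z:0\in Tz\}$; there is a nonempty $\mathcal S^\star\subseteq\operatorname{zer}T$ and $\rho\in\mathbb R$ with $\langle v,z-z^\star\rangle\ge\rho\|v\|^2$ for all $z^\star\in\mathcal S^\star$, $(z,v)$ with $v\in Tz$. Parameters: $\lambda_k\in(0,2)$, $\gamma_k\in(\max\{0,-2\rho\},\tfrac1L]$, $\delta_k\in(-\tfrac{\gamma_k}2,\rho]$. Iteration (AdaptiveEG+): $H_k:=\mathrm{id}-\gamma_kF$, $\bar z^k=(\mathrm{id}+\gamma_kA)^{-1}(z^k-\gamma_kFz^k)$, $\alpha_k=\frac{\delta_k}{\gamma_k}+\frac{\langle\bar z^k-z^k,H_k\bar z^k-H_kz^k\rangle}{\|H_k\bar z^k-H_kz^k\|^2}$, $z^{k+1}=z^k+\lambda_k\alpha_k(H_k\bar z^k-H_kz^k)$. *)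

From mathcomp Require Import all_boot all_order all_algebra.
From mathcomp Require Import reals.
Set Implicit Arguments. Unset Strict Implicit. Unset Printing Implicit Defensive.
Import Order.TTheory GRing.Theory Num.Theory.
Local Open Scope ring_scope.

Section Defs.
Variables (R : realType) (n : nat).
Notation V := 'rV[R]_n.

Definition dotp (u v : V) : R := \sum_(i < n) u ord0 i * v ord0 i.
Definition vnorm (u : V) : R := Num.sqrt (dotp u u).

(* A set-valued operator A : R^n ⇉ R^n is given by its graph: A z v <-> v ∈ A z *)
Definition monotone (A : V -> V -> Prop) : Prop :=
  forall z1 z2 v1 v2, A z1 v1 -> A z2 v2 -> 0 <= dotp (v1 - v2) (z1 - z2).

Definition maximally_monotone (A : V -> V -> Prop) : Prop :=
  monotone A /\
  forall z v, (forall z' v', A z' v' -> 0 <= dotp (v - v') (z - z')) -> A z v.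

Definition lipschitz (F : V -> V) (L : R) : Prop :=
  forall x y, vnorm (F x - F y) <= L * vnorm (x - y).

(* graph of T = A + F : v ∈ T z <-> v - F z ∈ A z *)
Definition sumop (A : V -> V -> Prop) (F : V -> V) (z v : V) : Prop := A z (v - F z).

Definition zer (T : V -> V -> Prop) (z : V) : Prop := T z 0.

(* y = (id + g A)^{-1} x  <->  x ∈ y + g A y  <->  (x - y)/g ∈ A y  (g > 0) *)
Definition resolvent_rel (A : V -> V -> Prop) (g : R) (x y : V) : Prop :=
  A y (g^-1 *: (x - y)).

Definition Hop (g : R) (F : V -> V) (x : V) : V := x - g *: F x.

Definition is_proj (C : V -> Prop) (x p : V) : Prop :=
  C p /\ forall w, C w -> vnorm (x - p) <= vnorm (x - w).

End Defs.

(* Write H = id - g F, y = (id + g A)^-1 (H x) and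
   v = H x - H y.  The proof rests on three observations.
   1. Half-space geometry: for D = {w | c <= <v, y - w>} and a point x outside
      the interior of D, the unique Euclidean projection of x onto D is
      x - s v with s = (<v, x - y> + c) / ||v||^2, and a relaxed step
      x - lam s v (0 <= lam <= 2) decreases the squared distance to every
      point of D by at least lam (2 - lam) s^2 ||v||^2.
   2. The adaptive stepsize alpha is exactly this s for c = (d/g) ||v||^2;
      since g <= 1/L, ||g (F y - F x)|| <= ||y - x||, which forces
      <y - x, H y - H x> >= ||H y - H x||^2 / 2, hence alpha >= d/g + 1/2.
   3. v / g lies in (A + F) y, so the weak Minty inequality with d <= rho
      places every point of S in D. *)

From mathcomp Require Import all_boot all_order all_algebra.
From mathcomp Require Import reals.
From mathcomp Require Import ring lra.
Set Implicit Arguments. Unset Strict Implicit. Unset Printing Implicit Defensive.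
Import Order.TTheory GRing.Theory Num.Theory.
Local Open Scope ring_scope.

Section InnerProduct.
Variables (R : realType) (n : nat).
Implicit Types (u v w : 'rV[R]_n) (a : R).

Lemma dotpC u v : dotp u v = dotp v u.
Proof. by apply: eq_bigr => i _; rewrite mulrC. Qed.

Lemma dotpDl u v w : dotp (u + v) w = dotp u w + dotp v w.
Proof. by rewrite /dotp -big_split; apply: eq_bigr => i _; rewrite mxE mulrDl. Qed.

Lemma dotpZl a u w : dotp (a *: u) w = a * dotp u w.
Proof. by rewrite /dotp mulr_sumr; apply: eq_bigr => i _; rewrite mxE mulrA. Qed.

Lemma dotpNl u w : dotp (- u) w = - dotp u w.
Proof. by rewrite -scaleN1r dotpZl mulN1r. Qed.

Lemma dotpDr u v w : dotp w (u + v) = dotp w u + dotp w v.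
Proof. by rewrite dotpC dotpDl !(dotpC w). Qed.

Lemma dotpZr a u w : dotp w (a *: u) = a * dotp w u.
Proof. by rewrite dotpC dotpZl dotpC. Qed.

Lemma dotpNr u w : dotp w (- u) = - dotp w u.
Proof. by rewrite dotpC dotpNl dotpC. Qed.

Definition dotpE := (dotpDl, dotpDr, dotpNl, dotpNr, dotpZl, dotpZr).

Lemma dotp_ge0 u : 0 <= dotp u u.
Proof. by apply: sumr_ge0 => i _; rewrite -expr2 sqr_ge0. Qed.

Lemma dotp_eq0 u : dotp u u = 0 -> u = 0.
Proof.
have sq_ge0 i : true -> 0 <= u ord0 i * u ord0 i by rewrite -expr2 sqr_ge0.
move=> /(psumr_eq0P sq_ge0) u0; apply/rowP => j; rewrite mxE.
have /eqP := u0 j isT.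
by rewrite mulf_eq0 orbb => /eqP.
Qed.

Lemma dotp_gt0 u : u != 0 -> 0 < dotp u u.
Proof.
by move=> u0; rewrite lt0r dotp_ge0 andbT; apply: contra u0 => /eqP/dotp_eq0->.
Qed.

Lemma vnorm_sq u : vnorm u ^+ 2 = dotp u u.
Proof. by rewrite /vnorm sqr_sqrtr // dotp_ge0. Qed.

Lemma vnorm_ge0 u : 0 <= vnorm u.
Proof. exact: sqrtr_ge0. Qed.

Lemma ler_vnorm u v : (vnorm u <= vnorm v) = (dotp u u <= dotp v v).
Proof. by rewrite /vnorm ler_sqrt // dotp_ge0. Qed.

Lemma dotp_subC u v w1 w2 : dotp (u - v) (w1 - w2) = dotp (w2 - w1) (v - u).
Proof. by rewrite -[u - v]opprB -[w1 - w2]opprB dotpNl dotpNr opprK dotpC. Qed.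

Lemma vnorm_subC u v : vnorm (u - v) = vnorm (v - u).
Proof. by rewrite -opprB /vnorm dotpNl dotpNr opprK. Qed.

End InnerProduct.

Section HalfSpaceProjection.
Variables (R : realType) (n : nat) (v y : 'rV[R]_n) (c : R).
Implicit Types (w : 'rV[R]_n) (lam : R).

Definition halfspace w : Prop := c <= dotp v (y - w).

Variable x : 'rV[R]_n.
Hypothesis v_neq0 : v != 0.
(* [x] is not in the interior of the half-space (for [x] inside, the
   projection would be [x] itself and [hs_step] below would be negative). *)
Hypothesis x_beyond : 0 <= dotp v (x - y) + c.

(* The projection of [x] onto the half-space is [x - hs_step *: v]. *)
Definition hs_step : R := (dotp v (x - y) + c) / dotp v v.

Let vv_gt0 : 0 < dotp v v := dotp_gt0 v_neq0.

Lemma hs_step_ge0 : 0 <= hs_step.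
Proof. by rewrite divr_ge0 // ltW. Qed.

Lemma hs_step_mul : hs_step * dotp v v = dotp v (x - y) + c.
Proof. by rewrite divfK // lt0r_neq0. Qed.

Lemma hs_proj_boundary : dotp v (y - (x - hs_step *: v)) = c.
Proof.
have -> : y - (x - hs_step *: v) = - (x - y) + hs_step *: v.
  by apply/rowP => i; rewrite !mxE; ring.
by rewrite dotpDr dotpNr dotpZr hs_step_mul; ring.
Qed.

(* Pythagorean inequality: moving from [x] to any point of the half-space
   passes the candidate projection at an obtuse angle. *)
Lemma hs_proj_pythagoras w : halfspace w ->
  dotp (x - (x - hs_step *: v)) (x - (x - hs_step *: v))
    + dotp (x - hs_step *: v - w) (x - hs_step *: v - w) <= dotp (x - w) (x - w).
Proof.
rewrite /halfspace => hw; set p := x - hs_step *: v.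
have vpw : 0 <= dotp v (p - w).
  have -> : p - w = (y - w) - (y - p) by apply/rowP => i; rewrite !mxE; ring.
  by rewrite dotpDr dotpNr hs_proj_boundary; lra.
have -> : x - w = (p - w) + hs_step *: v by apply/rowP => i; rewrite !mxE; ring.
have -> : x - p = hs_step *: v by apply/rowP => i; rewrite !mxE; ring.
move: vpw; move: (p - w) => e; rewrite !dotpE (dotpC e v).
have := hs_step_ge0; have := dotp_ge0 v; nra.
Qed.

Lemma hs_is_proj : is_proj halfspace x (x - hs_step *: v).
Proof.
split; first by rewrite /halfspace hs_proj_boundary.
move=> w /hs_proj_pythagoras hw; rewrite ler_vnorm.
by have := dotp_ge0 (x - hs_step *: v - w); lra.
Qed.

Lemma hs_proj_unique p : is_proj halfspace x p -> p = x - hs_step *: v.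
Proof.
move=> [hp]; set q := x - hs_step *: v.
move=> /(_ q (proj1 hs_is_proj)); rewrite ler_vnorm => closest.
have := hs_proj_pythagoras hp; rewrite -/q => pyth.
have qp0 : dotp (q - p) (q - p) = 0 by have := dotp_ge0 (q - p); lra.
by apply/eqP; rewrite eq_sym -subr_eq0; apply/eqP/dotp_eq0.
Qed.

Lemma hs_relaxed_step w lam : halfspace w -> 0 <= lam ->
  dotp (x - (lam * hs_step) *: v - w) (x - (lam * hs_step) *: v - w)
    <= dotp (x - w) (x - w) - lam * (2 - lam) * hs_step ^+ 2 * dotp v v.
Proof.
rewrite /halfspace => hw hlam.
have -> : x - (lam * hs_step) *: v - w = (x - w) - (lam * hs_step) *: v.
  by apply/rowP => i; rewrite !mxE; ring.
have vxw : hs_step * dotp v v <= dotp v (x - w).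
  have -> : x - w = (x - y) + (y - w) by apply/rowP => i; rewrite !mxE; ring.
  by rewrite hs_step_mul (dotpDr (x - y)); lra.
move: vxw; move: (x - w) => e; rewrite !dotpE (dotpC e v).
have := mulr_ge0 hlam hs_step_ge0; nra.
Qed.

Lemma hs_relaxed_step_lb w lam b : halfspace w -> 0 <= lam <= 2 ->
  0 <= b <= hs_step ->
  dotp (x - (lam * hs_step) *: v - w) (x - (lam * hs_step) *: v - w)
    <= dotp (x - w) (x - w) - lam * (2 - lam) * b ^+ 2 * dotp v v.
Proof.
move=> hw /andP[lam_ge0 lam_le2] /andP[b_ge0 b_le].
apply: le_trans (hs_relaxed_step hw lam_ge0) _.
rewrite lerD2l lerN2 ler_wpM2r ?dotp_ge0 // ler_wpM2l ?mulr_ge0 ?subr_ge0 //.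
by rewrite ler_sqr ?nnegrE // (le_trans b_ge0).
Qed.

End HalfSpaceProjection.

Section ForwardBackwardStep.
Variables (R : realType) (n : nat) (F : 'rV[R]_n -> 'rV[R]_n).
Implicit Types (x y zs a b : 'rV[R]_n) (g d : R).

Lemma Hop_sub g x y : Hop g F y - Hop g F x = (y - x) - g *: (F y - F x).
Proof. by rewrite /Hop scalerBr; apply/rowP => i; rewrite !mxE; ring. Qed.

(* If [b] is no longer than [a], then [<a, a - b>] is at least half of
   [||a - b||^2]; this is what bounds the adaptive stepsize from below. *)
Lemma dotp_sub_half a b :
  dotp b b <= dotp a a -> dotp (a - b) (a - b) <= 2 * dotp a (a - b).
Proof. by rewrite !dotpE (dotpC b a); lra. Qed.

Lemma lipschitz_step L g x y : lipschitz F L -> 0 <= g -> g * L <= 1 ->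
  dotp (g *: (F y - F x)) (g *: (F y - F x)) <= dotp (y - x) (y - x).
Proof.
move=> /(_ y x) hlip g_ge0 gL; rewrite dotpZl dotpZr -!vnorm_sq.
have shrink : g * vnorm (F y - F x) <= vnorm (y - x).
  apply: le_trans (ler_wpM2l g_ge0 hlip) _.
  by rewrite mulrA -[leRHS]mul1r ler_wpM2r // vnorm_ge0.
have := mulr_ge0 g_ge0 (vnorm_ge0 (F y - F x)); nra.
Qed.

Lemma Hop_sub_aligned L g x y : lipschitz F L -> 0 <= g -> g * L <= 1 ->
  dotp (Hop g F y - Hop g F x) (Hop g F y - Hop g F x)
    <= 2 * dotp (y - x) (Hop g F y - Hop g F x).
Proof.
move=> hlip g_ge0 gL; rewrite Hop_sub.
by apply: dotp_sub_half; exact: lipschitz_step hlip g_ge0 gL.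
Qed.

Definition eg_stepsize g d x y : R :=
  d / g + dotp (y - x) (Hop g F y - Hop g F x) / vnorm (Hop g F y - Hop g F x) ^+ 2.

Lemma eg_stepsize_lb L g d x y : lipschitz F L -> 0 <= g -> g * L <= 1 ->
  Hop g F y != Hop g F x -> d / g + 2^-1 <= eg_stepsize g d x y.
Proof.
move=> hlip g_ge0 gL H_neq.
rewrite /eg_stepsize lerD2l vnorm_sq ler_pdivlMr ?dotp_gt0 ?subr_eq0 //.
by have := Hop_sub_aligned x y hlip g_ge0 gL; lra.
Qed.

Lemma eg_stepsize_hs_step g d x y : Hop g F y != Hop g F x ->
  let v := Hop g F x - Hop g F y in
  eg_stepsize g d x y = hs_step v y (d / g * vnorm v ^+ 2) x.
Proof.
move=> H_neq v; have v_neq0 : dotp v v != 0.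
  by apply: lt0r_neq0; apply: dotp_gt0; rewrite subr_eq0 eq_sym.
rewrite /eg_stepsize /hs_step dotp_subC (vnorm_subC (Hop g F y)) -/v vnorm_sq.
by rewrite mulrDl (mulfK v_neq0) addrC.
Qed.

Variable A : 'rV[R]_n -> 'rV[R]_n -> Prop.

Lemma resolvent_Hop_value g x y : g != 0 ->
  resolvent_rel A g (x - g *: F x) y ->
  sumop A F y (g^-1 *: (Hop g F x - Hop g F y)).
Proof.
move=> g_neq0; rewrite /sumop /resolvent_rel.
suff -> : g^-1 *: (Hop g F x - Hop g F y) - F y = g^-1 *: (x - g *: F x - y) by [].
by rewrite /Hop; apply/rowP => i; rewrite !mxE; field.
Qed.

Lemma weak_minty_halfspace rho g d x y zs :
  (forall w v, sumop A F w v -> rho * vnorm v ^+ 2 <= dotp v (w - zs)) ->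
  0 < g -> d <= rho -> resolvent_rel A g (x - g *: F x) y ->
  halfspace (Hop g F x - Hop g F y) y
    (d / g * vnorm (Hop g F x - Hop g F y) ^+ 2) zs.
Proof.
move=> minty g_gt0 d_le hres; rewrite /halfspace.
have := minty _ _ (resolvent_Hop_value (lt0r_neq0 g_gt0) hres).
set v := Hop g F x - Hop g F y; rewrite !vnorm_sq !dotpZl dotpZr.
set e := dotp v (y - zs); set t := g^-1 => h.
have t_gt0 : 0 < t by rewrite invr_gt0.
have gt : g * t = 1 by rewrite mulfV // lt0r_neq0.
have scaled : rho * t * dotp v v <= e.
  have := ler_wpM2l (ltW g_gt0) h.
  have -> : g * (rho * (t * (t * dotp v v))) = rho * t * dotp v v * (g * t) by ring.
  by rewrite (mulrA g t) gt mulr1 mul1r.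
have := mulr_ge0 (ltW t_gt0) (dotp_ge0 v); nra.
Qed.

End ForwardBackwardStep.

(* Maximal monotonicity of [A], nonemptiness of [S] and [S] being made of
   zeros of [A + F] matter for the convergence analysis, not for one step. *)
Theorem mainTheorem2 (R : realType) (n : nat)
  (A : 'rV[R]_n -> 'rV[R]_n -> Prop) (F : 'rV[R]_n -> 'rV[R]_n) (L : R)
  (S : 'rV[R]_n -> Prop) (rho : R)
  (lam gam del : nat -> R) (z zbar : nat -> 'rV[R]_n) :
  maximally_monotone A ->
  0 < L -> lipschitz F L ->
  (exists zs, S zs) ->
  (forall zs, S zs -> zer (sumop A F) zs) ->
  (forall zs, S zs -> forall w v, sumop A F w v ->
       rho * vnorm v ^+ 2 <= dotp v (w - zs)) ->
  (forall k, 0 < lam k < 2) ->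
  (forall k, 0 < gam k /\ - (2 * rho) < gam k /\ gam k <= L^-1) ->
  (forall k, - (gam k / 2) < del k <= rho) ->
  (forall k, resolvent_rel A (gam k) (z k - gam k *: F (z k)) (zbar k)) ->
  (forall k, z k.+1 = z k + (lam k *
      (del k / gam k
       + dotp (zbar k - z k) (Hop (gam k) F (zbar k) - Hop (gam k) F (z k))
         / vnorm (Hop (gam k) F (zbar k) - Hop (gam k) F (z k)) ^+ 2))
      *: (Hop (gam k) F (zbar k) - Hop (gam k) F (z k))) ->
  forall k,
    let H := Hop (gam k) F in
    let alpha := del k / gam k
       + dotp (zbar k - z k) (H (zbar k) - H (z k))
         / vnorm (H (zbar k) - H (z k)) ^+ 2 in
    let D := fun w => del k / gam k * vnorm (H (z k) - H (zbar k)) ^+ 2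
                      <= dotp (H (z k) - H (zbar k)) (zbar k - w) in
    H (zbar k) != H (z k) ->
    [/\ del k / gam k + 2^-1 <= alpha /\ 0 < del k / gam k + 2^-1,
        (exists p, is_proj D (z k) p),
        (forall p, is_proj D (z k) p -> z k.+1 = (1 - lam k) *: z k + lam k *: p),
        (forall zs, S zs -> D zs) &
        (forall zs, S zs ->
           vnorm (z k.+1 - zs) ^+ 2 <= vnorm (z k - zs) ^+ 2
             - lam k * (2 - lam k) * (gam k / 2 + del k) ^+ 2 / gam k ^+ 2
               * vnorm (H (zbar k) - H (z k)) ^+ 2)].
Proof.
move=> _ L_gt0 hlip _ _ minty hlam hgam hdel hres hz k H alpha D H_neq.
have upd := hz k; rewrite -/H -/alpha in upd.
set x := z k; set y := zbar k; set g := gam k; set d := del k; set l := lam k.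
have [g_gt0 [_ gL]] : 0 < g /\ _ /\ g <= L^-1 := hgam k.
have /andP[d_lb d_ub] : - (g / 2) < d <= rho := hdel k.
have /andP[l_gt0 l_lt2] : 0 < l < 2 := hlam k.
set v := H x - H y; set c := d / g * vnorm v ^+ 2.
have v_neq0 : v != 0 by rewrite subr_eq0 eq_sym.
have gL1 : g * L <= 1 by rewrite -ler_pdivlMr // div1r.
have c_gt0 : 0 < d / g + 2^-1.
  have : - 2^-1 < d / g by rewrite ltr_pdivlMr // mulNr mulrC.
  lra.
have alpha_lb : d / g + 2^-1 <= alpha := eg_stepsize_lb d hlip (ltW g_gt0) gL1 H_neq.
have alpha_hs : alpha = hs_step v y c x := eg_stepsize_hs_step d H_neq.
have beyond : 0 <= dotp v (x - y) + c.
  by rewrite -(hs_step_mul y c x v_neq0) -alpha_hs mulr_ge0 ?dotp_ge0 //; lra.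
have step : z k.+1 = x - (l * hs_step v y c x) *: v.
  by rewrite upd -alpha_hs -[H y - H x]opprB scalerN.
have S_in_D zs : S zs -> D zs.
  by move=> /minty Szs; exact: weak_minty_halfspace Szs g_gt0 d_ub (hres k).
split.
- by split; lra.
- by exists (x - hs_step v y c x *: v); exact: hs_is_proj.
- move=> p /(hs_proj_unique v_neq0 beyond) ->.
  by rewrite step; apply/rowP => i; rewrite !mxE; ring.
- exact: S_in_D.
move=> zs /S_in_D zs_in_D.
have coef : l * (2 - l) * (g / 2 + d) ^+ 2 / g ^+ 2 = l * (2 - l) * (d / g + 2^-1) ^+ 2.
  by field; exact: lt0r_neq0.
rewrite step (vnorm_subC (H y)) coef !vnorm_sq.
apply: (hs_relaxed_step_lb v_neq0 beyond zs_in_D).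
- by apply/andP; split; lra.
- by rewrite -alpha_hs; apply/andP; split; lra.
Qed.
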